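(* Let $\alpha,\mu>0$ with $\varrho=\alpha/\mu<1$, and for $m\in\mathbb{N}$ let $\mathbf{E}_m$ be the stationary distribution on $\mathbb{N}$ of the single-server Processor-Sharing queue with $m$ permanent customers, Poisson arrivals of rate $\alpha$ and exponential service requirements of rate $\mu$ (described in the context). Then for all fixed $x>0$, $y>0$, \[ \lim_{A\to\infty}\frac1A\log\mathbf{E}_{[Ay]}([Ax])=-K(x,y),\qquad K(x,y)=x\log\Big(\frac{x}{\varrho}\Big)+y\log y-(x+y)\log(x+y)-y\log(1-\varrho). \]
   Context: The single-server PS queue with $m$ permanent customers is the birth-and-death process on $\mathbb{N}$ (number $n$ of non-permanent customers) with transitions $n\to n+1$ at rate $\alpha$ and $n\to n-1$ at rate $\mu n/(n+m)$ (the $n+m$ customers share unit capacity equally; permanent customers never leave). $[z]$ denotes the integer part of $z$. *)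

From Stdlib Require Import Reals Lra Lia ZArith.
From Coquelicot Require Import Coquelicot.
Open Scope R_scope.

(* Transition rates of the PS queue with m permanent customers, on states n : nat
   (number of non-permanent customers). *)
Definition birth_rate (alpha : R) (n : nat) : R := alpha.
Definition death_rate (mu : R) (m n : nat) : R :=
  match n with
  | O => 0
  | S _ => mu * INR n / INR (n + m)
  end.

Definition is_stationary_PS (alpha mu : R) (m : nat) (p : nat -> R) : Prop :=
  (forall n, 0 <= p n) /\
  is_series p 1 /\
  forall n : nat,
    p n * (birth_rate alpha n + death_rate mu m n) =
      (match n with O => 0 | S k => p k * birth_rate alpha k end)
      + p (S n) * death_rate mu m (S n).

Definition floor_nat (z : R) : nat := Z.to_nat (Int_part z).

Definition K_rate (rho x y : R) : R :=
  x * ln (x / rho) + y * ln y - (x + y) * ln (x + y) - y * ln (1 - rho).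

(* Cutting the state space between n and n+1 gives
   alpha E_m(n) = mu (n+1)/(n+1+m) E_m(n+1), so E_m is negative binomial,
   E_m(n) = (1-rho)^(m+1) C(n+m, n) rho^n, the normalising constant following
   from Pascal's rule by induction on m.  The crude Stirling bounds
   k ln k - k <= ln k! <= k ln k - k + ln (k+1) + 1 then give
   (1/A) ln E_m(n) = (n/A) ln rho + ((m+1)/A) ln (1-rho)
                     + h((n+m)/A) - h(n/A) - h(m/A) + O((1 + ln A)/A)
   with h(w) = w ln w, and for n = [Ax], m = [Ay] the right-hand side tends to
   -K(x,y) by continuity of h. *)

From Stdlib Require Import Reals Lra Lia ZArith.
From Coquelicot Require Import Coquelicot.
Open Scope R_scope.

Definition negbin_weight (r : R) (m n : nat) : R := r ^ n * Binomial.C (n + m) n.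

Lemma INR_fact_pos k : 0 < INR (fact k).
Proof. apply lt_0_INR, lt_O_fact. Qed.

Lemma C_add_l n m : Binomial.C (n + m) n = INR (fact (n + m)) / (INR (fact n) * INR (fact m)).
Proof. unfold Binomial.C. now replace (n + m - n)%nat with m by lia. Qed.

Lemma C_add_l_pos n m : 0 < Binomial.C (n + m) n.
Proof.
  rewrite C_add_l.
  pose proof (INR_fact_pos (n + m)); pose proof (INR_fact_pos n); pose proof (INR_fact_pos m).
  apply Rdiv_lt_0_compat; [| apply Rmult_lt_0_compat]; lra.
Qed.

Lemma negbin_weight_0 r m : negbin_weight r m 0 = 1.
Proof.
  unfold negbin_weight, Binomial.C. rewrite Nat.sub_0_r. simpl.
  field. apply not_0_INR, fact_neq_0.
Qed.

Lemma negbin_weight_S r m n :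
  negbin_weight r m (S n) = negbin_weight r m n * r * INR (S n + m) / INR (S n).
Proof.
  unfold negbin_weight. rewrite !C_add_l. simpl (S n + m)%nat.
  rewrite !fact_simpl, !mult_INR.
  pose proof (INR_fact_pos n); pose proof (INR_fact_pos m); pose proof (INR_fact_pos (n + m)).
  assert (INR (S n) <> 0) by (apply not_0_INR; lia).
  simpl pow. field. lra.
Qed.

Lemma negbin_weight_pascal r m n :
  negbin_weight r (S m) (S n) - r * negbin_weight r (S m) n = negbin_weight r m (S n).
Proof.
  unfold negbin_weight.
  replace (S n + S m)%nat with (S (n + S m)) by lia.
  replace (S n + m)%nat with (n + S m)%nat by lia.
  rewrite <- (pascal (n + S m) n) by lia.
  simpl pow. ring.
Qed.

Lemma is_series_tail (a : nat -> R) (l : R) :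
  is_series a l -> is_series (fun n => a (S n)) (l - a 0%nat).
Proof.
  intros H. apply is_series_incr_1.
  match goal with |- is_series _ ?s => replace s with l by (unfold plus; simpl; ring) end.
  exact H.
Qed.

Lemma is_series_unscale (c : R) (a : nat -> R) :
  is_series (fun n => c * a n) 1 -> is_series a (/ c).
Proof.
  intros H.
  assert (Hc : c <> 0).
  { intros ->. pose proof (is_series_scal_l 0 _ _ H) as H0.
    apply (is_series_ext _ (fun n => 0 * a n)) in H0.
    2: { intros n. change (0 * (0 * a n) = 0 * a n). ring. }
    apply is_series_unique in H. apply is_series_unique in H0.
    rewrite H in H0. compute in H0. lra. }
  pose proof (is_series_scal_l (/ c) _ _ H) as Ha.
  change (scal (/ c) 1) with (/ c * 1) in Ha. rewrite Rmult_1_r in Ha.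
  apply (is_series_ext _ a) in Ha; [exact Ha |].
  intros n. change (/ c * (c * a n) = a n). field. exact Hc.
Qed.

Lemma is_series_negbin_weight_0 r :
  Rabs r < 1 -> is_series (negbin_weight r 0) (/ (1 - r)).
Proof.
  intros Hr. apply (is_series_ext (fun n => r ^ n)); [| exact (is_series_geom r Hr)].
  intros n. unfold negbin_weight. rewrite C_add_l, Nat.add_0_r.
  pose proof (INR_fact_pos n). simpl (INR (fact 0)).
  change (r ^ n = r ^ n * (INR (fact n) / (INR (fact n) * 1))). field. lra.
Qed.

(* Only the relation between the sums is derived here; their existence is
   supplied by the stationary distributions. *)
Lemma is_series_negbin_weight_S r m s s' :
  is_series (negbin_weight r m) s -> is_series (negbin_weight r (S m)) s' ->
  (1 - r) * s' = s.
Proof.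
  intros Hs Hs'.
  assert (Hdiff : is_series (fun n => negbin_weight r m (S n)) (s' - 1 - r * s')).
  { apply (is_series_ext (fun n => negbin_weight r (S m) (S n) - r * negbin_weight r (S m) n)).
    - intros n. apply negbin_weight_pascal.
    - pose proof (is_series_tail _ _ Hs') as Htail. rewrite negbin_weight_0 in Htail.
      exact (is_series_minus _ _ _ _ Htail (is_series_scal_l r _ _ Hs')). }
  pose proof (is_series_tail _ _ Hs) as Htail. rewrite negbin_weight_0 in Htail.
  apply is_series_unique in Hdiff. apply is_series_unique in Htail. lra.
Qed.

Section Stationary.

Variables (alpha mu : R) (m : nat) (p : nat -> R).
Hypothesis (Hmu : 0 < mu) (Hp : is_stationary_PS alpha mu m p).

Lemma stationary_PS_cut_balance n : p n * alpha = p (S n) * death_rate mu m (S n).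
Proof.
  destruct Hp as (_ & _ & Hbal). unfold birth_rate in Hbal.
  induction n as [| n IH].
  - specialize (Hbal 0%nat). simpl death_rate in Hbal at 1. lra.
  - specialize (Hbal (S n)). lra.
Qed.

Lemma stationary_PS_negbin n : p n = p 0%nat * negbin_weight (alpha / mu) m n.
Proof.
  induction n as [| n IH].
  - rewrite negbin_weight_0. ring.
  - pose proof (stationary_PS_cut_balance n) as Hcut. unfold death_rate in Hcut.
    assert (INR (S n) <> 0) by (apply not_0_INR; lia).
    assert (0 < INR (S n + m)) by (apply lt_0_INR; lia).
    assert (Hstep : p (S n) = p n * alpha * INR (S n + m) / (mu * INR (S n))).
    { rewrite Hcut. field. lra. }
    rewrite Hstep, IH, negbin_weight_S. field. lra.
Qed.

End Stationary.

Lemma stationary_PS_closed_form alpha mu (E : nat -> nat -> R) :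
  0 < mu -> Rabs (alpha / mu) < 1 ->
  (forall m, is_stationary_PS alpha mu m (E m)) ->
  forall m n, E m n = (1 - alpha / mu) ^ S m * negbin_weight (alpha / mu) m n.
Proof.
  intros Hmu Hr HE. set (r := alpha / mu) in *.
  assert (Hsum : forall m, is_series (negbin_weight r m) (/ E m 0%nat)).
  { intros m. apply is_series_unscale. destruct (HE m) as (_ & Hs & _).
    apply (is_series_ext (E m)); [| exact Hs].
    intros n. exact (stationary_PS_negbin alpha mu m (E m) Hmu (HE m) n). }
  assert (H1r : 1 - r <> 0) by (apply Rabs_def2 in Hr; lra).
  assert (Hnorm : forall m, / E m 0%nat = / (1 - r) ^ S m).
  { induction m as [| m IH].
    - rewrite pow_1, <- (is_series_unique _ _ (Hsum 0%nat)).
      exact (is_series_unique _ _ (is_series_negbin_weight_0 r Hr)).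
    - apply (Rmult_eq_reg_l (1 - r)); [| exact H1r].
      rewrite (is_series_negbin_weight_S r m _ _ (Hsum m) (Hsum (S m))), IH.
      simpl pow. field. split; [apply pow_nonzero |]; exact H1r. }
  intros m n.
  rewrite (stationary_PS_negbin alpha mu m (E m) Hmu (HE m) n).
  f_equal. apply Rinv_eq_reg, Hnorm.
Qed.

Lemma ln_le_sub_1 z : 0 < z -> ln z <= z - 1.
Proof. intros Hz. pose proof (exp_ineq1_le (ln z)) as H. rewrite exp_ln in H; lra. Qed.

Lemma ln_succ_sub_ln_le K : 0 <= K -> K * (ln (K + 1) - ln K) <= 1.
Proof.
  intros HK. destruct (Req_dec K 0) as [-> | HK0]; [lra |].
  rewrite <- ln_div by lra.
  assert (H : ln ((K + 1) / K) <= (K + 1) / K - 1) by (apply ln_le_sub_1, Rdiv_lt_0_compat; lra).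
  apply Rmult_le_compat_l with (r := K) in H; [| lra].
  replace (K * ((K + 1) / K - 1)) with 1 in H by (field; lra). exact H.
Qed.

Lemma ln_succ_sub_ln_ge K : 0 < K -> 1 <= (K + 1) * (ln (K + 1) - ln K).
Proof.
  intros HK.
  assert (H : ln (K / (K + 1)) <= K / (K + 1) - 1) by (apply ln_le_sub_1, Rdiv_lt_0_compat; lra).
  rewrite ln_div in H by lra.
  apply Rmult_le_compat_l with (r := K + 1) in H; [| lra].
  replace ((K + 1) * (K / (K + 1) - 1)) with (-1) in H by (field; lra). lra.
Qed.

Lemma ln_fact_bounds k :
  INR k * ln (INR k) - INR k <= ln (INR (fact k)) <= (INR k + 1) * ln (INR k + 1) - INR k.
Proof.
  induction k as [| k IH].
  - simpl. rewrite Rplus_0_l, ln_1. lra.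
  - rewrite fact_simpl, mult_INR, ln_mult, S_INR
      by first [apply INR_fact_pos | apply lt_0_INR; lia].
    pose proof (pos_INR k).
    pose proof (ln_succ_sub_ln_le (INR k) ltac:(lra)).
    pose proof (ln_succ_sub_ln_ge (INR k + 1) ltac:(lra)).
    nra.
Qed.

Lemma ln_fact_stirling k :
  0 <= ln (INR (fact k)) - (INR k * ln (INR k) - INR k) <= ln (INR k + 1) + 1.
Proof.
  pose proof (ln_fact_bounds k). pose proof (ln_succ_sub_ln_le (INR k) (pos_INR k)). nra.
Qed.

Definition xlnx (w : R) : R := w * ln w.

Lemma xlnx_scale A K : 0 < A -> 0 <= K -> K * ln K = A * xlnx (K / A) + K * ln A.
Proof.
  intros HA HK. unfold xlnx. destruct (Req_dec K 0) as [-> | HK0].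
  - unfold Rdiv. ring.
  - rewrite ln_div by lra. field. lra.
Qed.

Lemma ln_C_add_l_entropy A n m : 0 < A ->
  Rabs (/ A * ln (Binomial.C (n + m) n)
        - (xlnx ((INR n + INR m) / A) - xlnx (INR n / A) - xlnx (INR m / A)))
  <= 2 * (ln (INR n + INR m + 1) + 1) / A.
Proof.
  intros HA. rewrite C_add_l.
  pose proof (INR_fact_pos (n + m)); pose proof (INR_fact_pos n); pose proof (INR_fact_pos m).
  rewrite ln_div, ln_mult by (try apply Rmult_lt_0_compat; lra).
  pose proof (ln_fact_stirling (n + m)) as Enm.
  pose proof (ln_fact_stirling n) as En. pose proof (ln_fact_stirling m) as Em.
  rewrite plus_INR in Enm.
  pose proof (pos_INR n); pose proof (pos_INR m).
  assert (ln (INR n + 1) <= ln (INR n + INR m + 1)) by (apply ln_le; lra).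
  assert (ln (INR m + 1) <= ln (INR n + INR m + 1)) by (apply ln_le; lra).
  assert (0 <= ln (INR n + 1)) by (rewrite <- ln_1; apply ln_le; lra).
  assert (0 <= ln (INR m + 1)) by (rewrite <- ln_1; apply ln_le; lra).
  rewrite (xlnx_scale A (INR n + INR m)) in Enm by lra.
  rewrite (xlnx_scale A (INR n)) in En by lra.
  rewrite (xlnx_scale A (INR m)) in Em by lra.
  set (e := ln (INR (fact (n + m))) - ln (INR (fact n)) - ln (INR (fact m))
            - A * (xlnx ((INR n + INR m) / A) - xlnx (INR n / A) - xlnx (INR m / A))).
  match goal with |- Rabs ?X <= _ => replace X with (e / A) by (unfold e; field; lra) end.
  unfold Rdiv. rewrite Rabs_mult, Rabs_inv, (Rabs_pos_eq A) by lra.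
  apply Rmult_le_compat_r; [left; apply Rinv_0_lt_compat; lra |].
  apply Rabs_le. unfold e. lra.
Qed.

Definition log_rate (r u v : R) : R :=
  u * ln r + v * ln (1 - r) + xlnx (u + v) - xlnx u - xlnx v.

Lemma K_rate_log_rate r x y : 0 < r -> 0 < x -> K_rate r x y = - log_rate r x y.
Proof. intros Hr Hx. unfold K_rate, log_rate, xlnx. rewrite ln_div by lra. ring. Qed.

Lemma ln_stationary_approx r A m n : 0 < r < 1 -> 0 < A ->
  Rabs (/ A * ln ((1 - r) ^ S m * negbin_weight r m n)
        - (log_rate r (INR n / A) (INR m / A) + / A * ln (1 - r)))
  <= 2 * (ln (INR n + INR m + 1) + 1) / A.
Proof.
  intros Hr HA. unfold negbin_weight.
  pose proof (C_add_l_pos n m).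
  assert (0 < (1 - r) ^ S m) by (apply pow_lt; lra).
  assert (0 < r ^ n) by (apply pow_lt; lra).
  rewrite ln_mult, ln_mult, !ln_pow, S_INR
    by first [lra | assumption | apply Rmult_lt_0_compat; assumption].
  unfold log_rate. replace (INR n / A + INR m / A) with ((INR n + INR m) / A) by (field; lra).
  match goal with |- Rabs ?X <= _ =>
    replace X with (/ A * ln (Binomial.C (n + m) n)
      - (xlnx ((INR n + INR m) / A) - xlnx (INR n / A) - xlnx (INR m / A)))
      by (field; lra) end.
  apply ln_C_add_l_entropy, HA.
Qed.

Lemma is_lim_approx (f g e : R -> R) (x : Rbar) (l : R) :
  Rbar_locally' x (fun A => Rabs (f A - g A) <= e A) ->
  is_lim g x l -> is_lim e x 0 -> is_lim f x l.
Proof.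
  intros Happrox Hg He.
  apply (is_lim_le_le_loc (fun A => g A - e A) (fun A => g A + e A)).
  - revert Happrox. apply filter_imp. intros A HA. apply Rabs_le_between' in HA. lra.
  - replace (Finite l) with (Finite (l - 0)) by (f_equal; ring). now apply is_lim_minus'.
  - replace (Finite l) with (Finite (l + 0)) by (f_equal; ring). now apply is_lim_plus'.
Qed.

Lemma is_lim_inv_p_infty : is_lim (fun A => / A) p_infty 0.
Proof.
  replace (Finite 0) with (Rbar_inv p_infty) by reflexivity.
  apply is_lim_inv; [apply is_lim_id | discriminate].
Qed.

Lemma is_lim_affine_ln_div a b : is_lim (fun A => (a + b * ln A) / A) p_infty 0.
Proof.
  apply (is_lim_ext (fun A => a * / A + b * (ln A / A))); [intros A; unfold Rdiv; ring |].
  replace (Finite 0) with (Finite (a * 0 + b * 0)) by (f_equal; ring).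
  apply is_lim_plus'.
  - exact (is_lim_scal_l _ a p_infty 0 is_lim_inv_p_infty).
  - exact (is_lim_scal_l _ b p_infty 0 is_lim_div_ln_p).
Qed.

Lemma floor_nat_bounds z : 0 <= z -> z - 1 < INR (floor_nat z) <= z.
Proof.
  intros Hz. unfold floor_nat. destruct (base_Int_part z) as [Hle Hgt].
  assert (Hnonneg : (0 <= Int_part z)%Z).
  { assert (Hgt1 : (-1 < Int_part z)%Z) by (apply lt_IZR; lra). lia. }
  rewrite INR_IZR_INZ, Z2Nat.id by exact Hnonneg. lra.
Qed.

Lemma is_lim_floor_nat_div x : 0 <= x -> is_lim (fun A => INR (floor_nat (A * x)) / A) p_infty x.
Proof.
  intros Hx. apply (is_lim_approx _ (fun _ => x) (fun A => / A)).
  - exists 0. intros A HA. pose proof (floor_nat_bounds (A * x) ltac:(nra)) as Hfl.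
    replace (INR (floor_nat (A * x)) / A - x) with ((INR (floor_nat (A * x)) - A * x) / A)
      by (field; lra).
    unfold Rdiv. rewrite Rabs_mult, Rabs_inv, (Rabs_pos_eq A) by lra.
    rewrite <- (Rmult_1_l (/ A)) at 2. apply Rmult_le_compat_r.
    + left. apply Rinv_0_lt_compat. lra.
    + apply Rabs_le. lra.
  - apply is_lim_const.
  - apply is_lim_inv_p_infty.
Qed.

Lemma continuous_xlnx w : 0 < w -> continuous xlnx w.
Proof.
  intros Hw. apply (@ex_derive_continuous R_AbsRing R_NormedModule).
  unfold xlnx. auto_derive. lra.
Qed.

Lemma is_lim_log_rate r (u v : R -> R) x y : 0 < x -> 0 < y ->
  is_lim u p_infty x -> is_lim v p_infty y ->
  is_lim (fun A => log_rate r (u A) (v A)) p_infty (log_rate r x y).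
Proof.
  intros Hx Hy Hu Hv.
  assert (Hxlnx : forall (w : R -> R) z, 0 < z -> is_lim w p_infty z ->
            is_lim (fun A => xlnx (w A)) p_infty (xlnx z)).
  { intros w z Hz Hw. apply is_lim_comp_continuous; [exact Hw |]. now apply continuous_xlnx. }
  unfold log_rate.
  apply is_lim_minus'; [apply is_lim_minus' |]; [apply is_lim_plus' | |].
  - apply is_lim_plus'.
    + exact (is_lim_scal_r u (ln r) p_infty x Hu).
    + exact (is_lim_scal_r v (ln (1 - r)) p_infty y Hv).
  - apply Hxlnx; [lra |]. now apply is_lim_plus'.
  - now apply Hxlnx.
  - now apply Hxlnx.
Qed.

Lemma ln_floor_nat_add_le A x y : 1 <= A -> 0 <= x -> 0 <= y ->
  ln (INR (floor_nat (A * x)) + INR (floor_nat (A * y)) + 1) <= ln (x + y + 1) + ln A.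
Proof.
  intros HA Hx Hy.
  pose proof (floor_nat_bounds (A * x) ltac:(nra)).
  pose proof (floor_nat_bounds (A * y) ltac:(nra)).
  pose proof (pos_INR (floor_nat (A * x))); pose proof (pos_INR (floor_nat (A * y))).
  rewrite <- ln_mult by lra. apply ln_le; nra.
Qed.

Theorem lemma2 (alpha mu : R) (E : nat -> nat -> R) :
  0 < alpha -> 0 < mu -> alpha / mu < 1 ->
  (forall m : nat, is_stationary_PS alpha mu m (E m)) ->
  forall x y : R, 0 < x -> 0 < y ->
    is_lim (fun A => / A * ln (E (floor_nat (A * y)) (floor_nat (A * x))))
      p_infty (Finite (- K_rate (alpha / mu) x y)).
Proof.
  intros Halpha Hmu Hr1 HE x y Hx Hy.
  assert (Hr0 : 0 < alpha / mu) by (apply Rdiv_lt_0_compat; lra).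
  assert (Hr : Rabs (alpha / mu) < 1) by (rewrite Rabs_pos_eq; lra).
  set (r := alpha / mu) in *.
  set (u := fun A => INR (floor_nat (A * x)) / A).
  set (v := fun A => INR (floor_nat (A * y)) / A).
  set (c := 2 * (ln (x + y + 1) + 1)).
  apply (is_lim_approx _ (fun A => log_rate r (u A) (v A) + / A * ln (1 - r))
           (fun A => (c + 2 * ln A) / A)).
  - exists 1. intros A HA.
    rewrite (stationary_PS_closed_form alpha mu E Hmu Hr HE).
    eapply Rle_trans; [apply ln_stationary_approx; lra |].
    pose proof (ln_floor_nat_add_le A x y ltac:(lra) ltac:(lra) ltac:(lra)).
    unfold Rdiv, c. apply Rmult_le_compat_r; [left; apply Rinv_0_lt_compat |]; lra.
  - rewrite K_rate_log_rate, Ropp_involutive by lra.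
    replace (Finite (log_rate r x y)) with (Finite (log_rate r x y + 0 * ln (1 - r)))
      by (f_equal; ring).
    apply is_lim_plus'.
    + apply is_lim_log_rate; [lra | lra | |]; apply is_lim_floor_nat_div; lra.
    + exact (is_lim_scal_r _ (ln (1 - r)) p_infty 0 is_lim_inv_p_infty).
  - apply is_lim_affine_ln_div.
Qed.
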